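(* Let $(A_n)_{n\ge1}$ be a sequence of matrices with strictly positive entries (of arbitrary sizes, each dimension at least $2$) such that all products $P_n:=A_n A_{n-1}\cdots A_1$ are defined. Let $\alpha_n\ge1$ satisfy $R(A_n)\le\alpha_n$ for all $n$, put $p_n=\sqrt{\alpha_n}$, and define $q_1=p_1$, $q_{n+1}=\Psi(p_{n+1},q_n)$ where $\Psi(p,q)=\frac{1+pq}{p+q}$. Then $\sqrt{R(P_n)}\le q_n$, i.e. $R(P_n)\le q_n^2$, for every $n\ge1$.
   Context: For a matrix $A=(a_{ik})$ of size $d_1\times d_2$ with strictly positive entries, its distortion is $R(A)=\max_{1\le i,j\le d_1,\ 1\le k,\ell\le d_2}\frac{a_{ik}a_{j\ell}}{a_{i\ell}a_{jk}}$. *)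

From HB Require Import structures.
From mathcomp Require Import all_boot all_order all_algebra.
Set Implicit Arguments. Unset Strict Implicit. Unset Printing Implicit Defensive.
Import Order.TTheory GRing.Theory Num.Theory.
Local Open Scope ring_scope.

(* The ratio for i=j is 1, so the max is >= 1 > 0 and taking
   the big max with neutral 0 gives exactly the maximum. *)
Definition distortion (R : realFieldType) (m n : nat) (A : 'M[R]_(m, n)) : R :=
  \big[Num.max/0]_(i < m) \big[Num.max/0]_(j < m)
    \big[Num.max/0]_(k < n) \big[Num.max/0]_(l < n)
      ((A i k * A j l) / (A i l * A j k)).

Definition positive_mx (R : realFieldType) (m n : nat) (A : 'M[R]_(m, n)) : Prop :=
  forall i j, 0 < A i j.

Definition Psi (R : realFieldType) (p q : R) : R := (1 + p * q) / (p + q).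

(* Index shift: A k stands for A_{k+1}; it maps R^{d k} to R^{d (k+1)}.
   prodA A k stands for P_{k+1} = A_{k+1} ... A_1. *)
Fixpoint prodA (R : realFieldType) (d : nat -> nat)
  (A : forall k, 'M[R]_(d k.+1, d k)) (k : nat) : 'M[R]_(d k.+1, d 0) :=
  match k with
  | 0 => A 0
  | k'.+1 => A k'.+1 *m prodA A k'
  end.

(* qseq p k stands for q_{k+1}, where p k stands for p_{k+1}. *)
Fixpoint qseq (R : realFieldType) (p : nat -> R) (k : nat) : R :=
  match k with
  | 0 => p 0
  | k'.+1 => Psi (p k'.+1) (qseq p k')
  end.

From HB Require Import structures.
From mathcomp Require Import all_boot all_order all_algebra.
From mathcomp Require Import ring lra.
Set Implicit Arguments. Unset Strict Implicit. Unset Printing Implicit Defensive.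
Import Order.TTheory GRing.Theory Num.Theory.
Local Open Scope ring_scope.

(* For rows i, j of A and columns k, l of B put a_t = A i t, b_t = A j t,
   c_t = B t k, d_t = B t l.  The distortion bounds mean that the ratios b_t / a_t
   lie in some [L, p^2 L] and the ratios d_t / c_t in some [M, q^2 M].  Hence
   (b_t - L a_t)(q^2 M c_t - d_t) >= 0 and (p^2 L a_t - b_t)(d_t - M c_t) >= 0;
   summing over t bounds S = sum b d linearly by W = sum a c, U = sum b c and
   V = sum a d, which are themselves pinned to intervals.  A quadratic
   inequality on these four numbers then gives W S <= Psi(p, q)^2 U V, i.e.
   R(A B) <= Psi(p, q)^2 whenever R(A) <= p^2 and R(B) <= q^2; induction along
   the product finishes. *)

Lemma ratio_le_distortion (R : realFieldType) m n (A : 'M[R]_(m, n)) i j k l :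
  A i k * A j l / (A i l * A j k) <= distortion A.
Proof.
apply: (bigmax_sup i) => //; apply: (bigmax_sup j) => //.
by apply: (bigmax_sup k) => //; apply: le_bigmax.
Qed.

Lemma distortion_le (R : realFieldType) m n (A : 'M[R]_(m, n)) c :
  0 <= c -> (forall i j k l, A i k * A j l / (A i l * A j k) <= c) ->
  distortion A <= c.
Proof. by move=> c0 Ac; do 4 apply: bigmax_le => // ? _. Qed.

Lemma distortion_cross_le (R : realFieldType) m n (A : 'M[R]_(m, n)) r i j k l :
  positive_mx A -> distortion A <= r -> A i k * A j l <= r * (A i l * A j k).
Proof.
move=> Apos Ar; have := le_trans (ratio_le_distortion A i j k l) Ar.
by rewrite ler_pdivrMr ?mulr_gt0.
Qed.

Lemma positive_mx_mul (R : realFieldType) m n r (A : 'M[R]_(m, n)) (B : 'M[R]_(n, r)) :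
  (0 < n)%N -> positive_mx A -> positive_mx B -> positive_mx (A *m B).
Proof.
move=> n_gt0 Apos Bpos i k; rewrite mxE (bigD1 (Ordinal n_gt0)) //=.
by rewrite ltr_wpDr ?mulr_gt0 // sumr_ge0 // => t _; rewrite mulr_ge0 ?ltW.
Qed.

Lemma Psi_sqr_bound_case (R : realFieldType) (p q w u v : R) :
  1 <= p -> 1 <= q -> 0 <= w -> w <= u -> w <= v <= q ^+ 2 * w ->
  (p ^+ 2 - 1) * (v - w) <= (q ^+ 2 - 1) * (u - w) ->
  (p + q) ^+ 2 * (w * (p ^+ 2 * v + u - p ^+ 2 * w)) <= (1 + p * q) ^+ 2 * (u * v).
Proof.
move=> p1 q1 w0 wu /andP[wv vq] hcase; rewrite -subr_ge0.
have a0 : 0 <= p ^+ 2 - 1 by rewrite subr_ge0 exprn_ege1.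
have [b0 | b_neq0] := eqVneq (q ^+ 2 - 1) 0.
  have q2 : q ^+ 2 = 1 by apply/eqP; rewrite -subr_eq0 b0.
  have -> : v = w by apply/eqP; rewrite eq_le wv andbT; rewrite q2 mul1r in vq.
  have -> : (1 + p * q) ^+ 2 * (u * w) - (p + q) ^+ 2 * (w * (p ^+ 2 * w + u - p ^+ 2 * w))
    = (p ^+ 2 - 1) * (q ^+ 2 - 1) * (u * w) by ring.
  by rewrite b0 mulr0 mul0r.
have b_gt0 : 0 < q ^+ 2 - 1 by rewrite lt_def b_neq0 subr_ge0 exprn_ege1.
(* The identity below rests on (1 + p q)^2 - (p + q)^2 = (p^2 - 1)(q^2 - 1). *)
rewrite -(pmulr_rge0 _ b_gt0).
have -> : (q ^+ 2 - 1) * ((1 + p * q) ^+ 2 * (u * v) -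
    (p + q) ^+ 2 * (w * (p ^+ 2 * v + u - p ^+ 2 * w))) =
  (p ^+ 2 - 1) * ((1 + p * q) * (v - w) - (q ^+ 2 - 1) * w) ^+ 2 +
  ((q ^+ 2 - 1) * (u - w) - (p ^+ 2 - 1) * (v - w)) *
    ((1 + p * q) ^+ 2 * (v - w) + (p ^+ 2 - 1) * (q ^+ 2 - 1) * w) by ring.
apply: addr_ge0; first by rewrite mulr_ge0 ?sqr_ge0.
rewrite mulr_ge0 ?subr_ge0 //.
by apply: addr_ge0; apply: mulr_ge0; rewrite ?sqr_ge0 ?mulr_ge0 ?a0 ?(ltW b_gt0) ?subr_ge0.
Qed.

Lemma Psi_sqr_bound (R : realFieldType) (p q w u v s : R) :
  1 <= p -> 1 <= q -> 0 <= w -> w <= u <= p ^+ 2 * w -> w <= v <= q ^+ 2 * w ->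
  s <= q ^+ 2 * u + v - q ^+ 2 * w -> s <= p ^+ 2 * v + u - p ^+ 2 * w ->
  w * s <= Psi p q ^+ 2 * (u * v).
Proof.
move=> p1 q1 w0 hu hv s_le_q s_le_p.
have /andP[wu _] := hu; have /andP[wv _] := hv.
have pq_gt0 : 0 < p + q by rewrite addr_gt0 // (lt_le_trans ltr01).
rewrite /Psi expr_div_n mulrAC ler_pdivlMr ?exprn_gt0 // mulrC.
(* The two cases are exchanged by swapping (p, u) with (q, v). *)
have [hcase | hcase] := leP ((p ^+ 2 - 1) * (v - w)) ((q ^+ 2 - 1) * (u - w)).
  apply: le_trans (Psi_sqr_bound_case p1 q1 w0 wu hv hcase).
  by rewrite ler_wpM2l ?sqr_ge0 ?ler_wpM2l.
have := Psi_sqr_bound_case q1 p1 w0 wv hu (ltW hcase).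
rewrite addrC [q * p]mulrC [v * u]mulrC; apply: le_trans.
by rewrite ler_wpM2l ?sqr_ge0 ?ler_wpM2l.
Qed.

Lemma mulr_le_cross (R : realFieldType) (x1 y1 x2 y2 : R) :
  x1 <= y1 -> y2 <= x2 -> y1 * y2 <= y1 * x2 + x1 * y2 - x1 * x2.
Proof.
move=> le1 le2; rewrite -subr_ge0 (_ : _ - _ = (y1 - x1) * (x2 - y2)); last by ring.
by rewrite mulr_ge0 ?subr_ge0.
Qed.

Lemma sum_sandwich (R : realFieldType) (I : finType) (x y w : I -> R) (L r : R) :
  (forall t, 0 <= w t) -> (forall t, L * x t <= y t <= r * (L * x t)) ->
  L * (\sum_t x t * w t) <= \sum_t y t * w t <= r * (L * \sum_t x t * w t).
Proof.
move=> w0 hxy; rewrite !mulr_sumr; apply/andP; split; apply: ler_sum => t _.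
  by rewrite mulrA ler_wpM2r //; case/andP: (hxy t).
by rewrite !mulrA ler_wpM2r // -!mulrA; case/andP: (hxy t).
Qed.

Lemma sum_cross_le (R : realFieldType) (I : finType) (a b c d : I -> R) (p q L M : R) :
  1 <= p -> 1 <= q -> 0 < L -> 0 < M ->
  (forall t, 0 <= a t) -> (forall t, 0 <= c t) ->
  (forall t, L * a t <= b t <= p ^+ 2 * (L * a t)) ->
  (forall t, M * c t <= d t <= q ^+ 2 * (M * c t)) ->
  (\sum_t a t * c t) * (\sum_t b t * d t) <=
    Psi p q ^+ 2 * ((\sum_t a t * d t) * (\sum_t b t * c t)).
Proof.
move=> p1 q1 L_gt0 M_gt0 a0 c0 hb hd.
set W := \sum_t a t * c t; set U := \sum_t b t * c t.
set V := \sum_t a t * d t; set S := \sum_t b t * d t.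
have /andP[LW_U U_pLW] := sum_sandwich c0 hb.
have /andP[MW_V V_qMW] : M * W <= V <= q ^+ 2 * (M * W).
  rewrite /W /V !(eq_bigr _ (fun t _ => mulrC (a t) _)).
  exact: sum_sandwich a0 hd.
have hU : L * M * W <= M * U <= p ^+ 2 * (L * M * W).
  by rewrite [L * M]mulrC -[M * L * W]mulrA [p ^+ 2 * _]mulrCA !ler_pM2l ?LW_U.
have hV : L * M * W <= L * V <= q ^+ 2 * (L * M * W).
  by rewrite -[L * M * W]mulrA [q ^+ 2 * _]mulrCA !ler_pM2l ?MW_V.
have hSq : S <= q ^+ 2 * (M * U) + L * V - q ^+ 2 * (L * M * W).
  rewrite /S /U /V /W !mulr_sumr -big_split -sumrB /=; apply: ler_sum => t _.
  have /andP[La_b _] := hb t; have /andP[_ d_qMc] := hd t.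
  by have := mulr_le_cross La_b d_qMc; lra.
have hSp : S <= p ^+ 2 * (L * V) + M * U - p ^+ 2 * (L * M * W).
  rewrite /S /U /V /W !mulr_sumr -big_split -sumrB /=; apply: ler_sum => t _.
  have /andP[_ b_pLa] := hb t; have /andP[Mc_d _] := hd t.
  by have := mulr_le_cross Mc_d b_pLa; lra.
have W0 : 0 <= W by rewrite /W sumr_ge0 // => t _; rewrite mulr_ge0.
have LMW0 : 0 <= L * M * W by rewrite !mulr_ge0 // ltW.
(* Rescaling to w := L M W, u := M U, v := L V removes L and M. *)
have := Psi_sqr_bound p1 q1 LMW0 hU hV hSq hSp.
set P := Psi p q ^+ 2.
rewrite (_ : _ * S = L * M * (W * S)); last by ring.
rewrite (_ : P * _ = L * M * (P * (V * U))); last by ring.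
by rewrite ler_pM2l ?mulr_gt0.
Qed.

Lemma ratio_sandwich (R : realFieldType) (I : finType) (i0 : I) (a b : I -> R) r :
  (forall t, 0 < a t) -> (forall t, 0 < b t) ->
  (forall s t, a s * b t <= r * (a t * b s)) ->
  exists2 L, 0 < L & forall t, L * a t <= b t <= r * (L * a t).
Proof.
move=> a_gt0 b_gt0 hab.
have [m _ m_min] := @arg_minP _ R _ i0 xpredT (fun t => b t / a t) isT.
exists (b m / a m) => [|t]; first by rewrite divr_gt0.
apply/andP; split; first by rewrite -ler_pdivlMr // m_min.
rewrite -(ler_pM2l (a_gt0 m)) (_ : _ * (r * _) = r * (a t * b m)) ?hab //.
by field; rewrite gt_eqF.
Qed.

Lemma distortion_mulmx_le (R : realFieldType) m n r (A : 'M[R]_(m, n)) (B : 'M[R]_(n, r))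
    (p q : R) :
  (0 < n)%N -> positive_mx A -> positive_mx B -> 1 <= p -> 1 <= q ->
  distortion A <= p ^+ 2 -> distortion B <= q ^+ 2 ->
  distortion (A *m B) <= Psi p q ^+ 2.
Proof.
move=> n_gt0 Apos Bpos p1 q1 dA dB.
have ABpos := positive_mx_mul n_gt0 Apos Bpos.
apply: distortion_le => [|i j k l]; first exact: sqr_ge0.
rewrite ler_pdivrMr ?mulr_gt0 // !mxE.
have [L L_gt0 hL] := ratio_sandwich (Ordinal n_gt0) (Apos i) (Apos j)
  (fun s t => distortion_cross_le i j s t Apos dA).
have [M M_gt0 hM] : exists2 M, 0 < M &
    forall t, M * B t k <= B t l <= q ^+ 2 * (M * B t k).
  apply: (ratio_sandwich (a := fun t => B t k) (b := fun t => B t l) (Ordinal n_gt0))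
    => // s t.
  by rewrite [B t k * _]mulrC distortion_cross_le.
by apply: sum_cross_le p1 q1 L_gt0 M_gt0 _ _ hL hM => t; apply: ltW.
Qed.

Lemma Psi_ge1 (R : realFieldType) (p q : R) : 1 <= p -> 1 <= q -> 1 <= Psi p q.
Proof.
move=> p1 q1; rewrite /Psi ler_pdivlMr ?mul1r; last by rewrite addr_gt0 // (lt_le_trans ltr01).
rewrite -subr_ge0 (_ : _ - _ = (p - 1) * (q - 1)); last by ring.
by rewrite mulr_ge0 ?subr_ge0.
Qed.

Lemma qseq_ge1 (R : realFieldType) (p : nat -> R) k :
  (forall i, 1 <= p i) -> 1 <= qseq p k.
Proof. by move=> p1; elim: k => [|k IHk] //=; apply: Psi_ge1. Qed.

Section Products.
Variables (R : realFieldType) (d : nat -> nat) (A : forall k, 'M[R]_(d k.+1, d k)).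
Hypotheses (d_gt0 : forall k, (0 < d k)%N) (Apos : forall k, positive_mx (A k)).

Lemma positive_mx_prodA k : positive_mx (prodA A k).
Proof. by elim: k => [|k IHk] //=; apply: positive_mx_mul. Qed.

Lemma distortion_prodA_le (p : nat -> R) k :
  (forall i, 1 <= p i) -> (forall i, distortion (A i) <= p i ^+ 2) ->
  distortion (prodA A k) <= qseq p k ^+ 2.
Proof.
move=> p1 dA; elim: k => [|k IHk] //=.
apply: distortion_mulmx_le => //; [exact: positive_mx_prodA | exact: qseq_ge1].
Qed.

End Products.

Theorem mainTheorem10 (R : rcfType) (d : nat -> nat)
  (A : forall k, 'M[R]_(d k.+1, d k)) (alpha : nat -> R) :
  (forall k, (2 <= d k)%N) ->
  (forall k, positive_mx (A k)) ->
  (forall k, 1 <= alpha k) ->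
  (forall k, distortion (A k) <= alpha k) ->
  forall k,
    Num.sqrt (distortion (prodA A k)) <= qseq (fun i => Num.sqrt (alpha i)) k /\
    distortion (prodA A k) <= (qseq (fun i => Num.sqrt (alpha i)) k) ^+ 2.
Proof.
move=> d_ge2 Apos alpha1 dA k.
set p := fun i => Num.sqrt (alpha i).
have alpha0 i : 0 <= alpha i := le_trans ler01 (alpha1 i).
have p1 i : 1 <= p i by rewrite -sqrtr1 ler_sqrt.
have dAp i : distortion (A i) <= p i ^+ 2 by rewrite sqr_sqrtr.
have d_gt0 i : (0 < d i)%N := ltnW (d_ge2 i).
have dP := distortion_prodA_le d_gt0 Apos k p1 dAp.
split=> //; have q0 := le_trans ler01 (qseq_ge1 k p1).
by rewrite -(ger0_norm q0) -sqrtr_sqr ler_sqrt ?sqr_ge0.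
Qed.
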